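(* Let $A_{\mathbbm{1}}$ be the matrix of the quadratic form $q_{\mathbbm{1}}$ on the space of polynomials of degree at most $1$ on $\mathbb{R}^{n(n-1)/2}$, in the monomial basis $\{1\}\cup\{x_{ij}\}$, where $\mathbbm{1}(x)=1$ for all $x\in X$; identify a polynomial of degree at most $1$ with its coefficient vector. Then for any $1\le i\le n$, $2-\sum_{j\ne i}x_{ij}$ is an eigenvector of $A_{\mathbbm{1}}$ with eigenvalue $0$, and for any distinct $\alpha,\beta,\gamma,\delta\in\{1,\dotsc,n\}$, $x_{\alpha\beta}-x_{\beta\gamma}+x_{\gamma\delta}-x_{\delta\alpha}$ is an eigenvector of $A_{\mathbbm{1}}$ with eigenvalue $\frac{2}{n-1}$.
   Context: Let $N=n(n-1)/2$, coordinates of $\mathbb{R}^N$ indexed by unordered pairs $\{i,j\}$ of distinct elements of $\{1,\dotsc,n\}$, written $x_{ij}=x_{ji}$. Let $X\subset\mathbb{R}^N$ be the set of incidence vectors of Hamiltonian cycles of $K_n$. For $f:X\to\mathbb{R}$, $q_f(h)=\frac{1}{|X|}\sum_{x\in X}f(x)h(x)^2$, and its matrix in the monomial basis has entry indexed by monomials $\mu,\nu$ equal to $\frac{1}{|X|}\sum_{x\in X}f(x)\mu(x)\nu(x)$. *)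

From HB Require Import structures.
From mathcomp Require Import all_boot all_order all_algebra all_fingroup.
Unset Printing Implicit Defensive.
Import Order.TTheory GRing.Theory Num.Theory.
Local Open Scope ring_scope.

(* Unordered pairs {i,j} of distinct vertices of K_n: the coordinates of R^N. *)
Definition Edge (n : nat) := {e : {set 'I_n} | #|e| == 2}.

(* Monomials of degree <= 1: None = the constant 1, Some e = x_e. *)
Definition Mono (n : nat) := option (Edge n).

Definition hamiltonian {n : nat} (H : {set {set 'I_n}}) : bool :=
  [exists s : {perm 'I_n}, H == [set [set s k; s (ordS k)] | k : 'I_n]].

(* X, identified with the set of edge sets of Hamiltonian cycles;
   the incidence vector of H has x_e = 1 iff e \in H. *)
Definition HamX (n : nat) : {set {set {set 'I_n}}} := [set H | hamiltonian H].

Definition mono_eval (R : nzRingType) {n : nat} (m : Mono n) (H : {set {set 'I_n}}) : R :=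
  if m is Some e then (val e \in H)%:R else 1.

(* Matrix of q_f in the monomial basis (basis indexed via enum_val). *)
Definition qmat {R : fieldType} {n : nat} (f : {set {set 'I_n}} -> R)
  : 'M[R]_#|{: Mono n}| :=
  \matrix_(k, l) ((#|HamX n|%:R)^-1 *
     \sum_(H in HamX n) f H * mono_eval R (enum_val k) H * mono_eval R (enum_val l) H).

Definition one_fun (R : nzRingType) (n : nat) : {set {set 'I_n}} -> R := fun _ => 1.

Definition A1 (R : fieldType) (n : nat) := qmat (@one_fun R n).

Definition lpoly (R : nzRingType) (n : nat) := {ffun Mono n -> R}.

Definition lconst (R : nzRingType) (n : nat) (c : R) : lpoly R n :=
  [ffun m => if m is None then c else 0].

Definition xvar (R : nzRingType) {n : nat} (i j : 'I_n) : lpoly R n :=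
  [ffun m => if m is Some e then (val e == [set i; j])%:R else 0].

Definition coefvec {R : nzRingType} {n : nat} (p : lpoly R n) : 'cV[R]_#|{: Mono n}| :=
  \col_k p (enum_val k).

Definition eigenvector {R : fieldType} {m : nat} (A : 'M[R]_m) (v : 'cV[R]_m) (lam : R) :=
  v != 0 /\ A *m v = lam *: v.

(* Writing m(H) for the vector of monomials at the cycle H, A1 is the average of
   m(H) m(H)^T, so the m-th coordinate of A1 p is the average of m(H) p(H) over X.
   Every vertex of a Hamiltonian cycle has degree 2, so 2 - sum_j x_ij vanishes on X.
   For q = x_ab - x_bc + x_cd - x_da, relabelling vertices permutes X, and the
   transpositions (a c) and (b d) negate q: this kills every coordinate fixed by one of
   them, and the remaining ones, the four edges of the 4-cycle abcd, reduce to ab by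
   rotating (a, b, c, d).  There, with N(E) the number of cycles through the edges E,
   double counting degrees gives (n-1) N(ab) = 2|X|, (n-2) N(ab,bc) = N(ab) and
   (n-2) N(ab,cd) = 2 N(ab), so the coordinate is N(ab) - N(ab,bc) + N(ab,cd) - N(ab,da)
   = N(ab) = 2|X|/(n-1). *)

From HB Require Import structures.
From mathcomp Require Import all_boot all_order all_algebra all_fingroup.
From mathcomp Require Import zify ring.
Import Order.TTheory GRing.Theory Num.Theory.

Lemma imset_set2 (aT rT : finType) (f : aT -> rT) (x y : aT) :
  f @: [set x; y] = [set f x; f y].
Proof. by rewrite imsetU1 imset_set1. Qed.

Lemma set2_eq (T : finType) (x y z w : T) :
  ([set x; y] == [set z; w]) = ((x == z) && (y == w)) || ((x == w) && (y == z)).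
Proof.
apply/eqP/idP => [E|/orP[]/andP[/eqP-> /eqP->] //]; last exact: setUC.
have: x \in [set z; w] by rewrite -E set21.
have: y \in [set z; w] by rewrite -E set22.
have: z \in [set x; y] by rewrite E set21.
have: w \in [set x; y] by rewrite E set22.
by rewrite !inE; do 4 case/orP=> /eqP ?; subst; rewrite !eqxx ?orbT.
Qed.

Lemma set2C (T : finType) (x y : T) : [set x; y] = [set y; x].
Proof. exact: setUC. Qed.

Lemma uniq4_eqF {T : eqType} {a b c d : T} : uniq [:: a; b; c; d] ->
  ((a == b) = false) * ((a == c) = false) * ((a == d) = false) *
  ((b == a) = false) * ((b == c) = false) * ((b == d) = false) *
  ((c == a) = false) * ((c == b) = false) * ((c == d) = false) *
  ((d == a) = false) * ((d == b) = false) * ((d == c) = false).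
Proof.
rewrite /= !inE !negb_or !andbT => /and3P[/and3P[ab ac ad] /andP[bc bd] cd].
by do !split; apply/negbTE; rewrite // eq_sym.
Qed.

Lemma set2_of_card2 {T : finType} {A : {set T}} {x y : T} :
  #|A| == 2 -> x \in A -> y \in A -> x != y -> A = [set x; y].
Proof.
move=> A2 xA yA xy; apply/esym/eqP; rewrite eqEcard (eqP A2) cards2 xy andbT.
by apply/subsetP => z /set2P[]->.
Qed.

Lemma imset_tperm_id {T : finType} {x y : T} {A : {set T}} :
  (x \in A) = (y \in A) -> tperm x y @: A = A.
Proof.
move=> xyA; apply/eqP; rewrite eqEcard card_imset ?leqnn ?andbT; last exact: perm_inj.
by apply/subsetP => _ /imsetP[z zA ->]; case: tpermP => [zx|zy|//]; rewrite -?xyA -?zx // xyA -zy.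
Qed.

Lemma big_option {R : Type} {idx : R} (op : Monoid.com_law idx) (T : finType)
    (F : option T -> R) :
  \big[op/idx]_(m : option T) F m = op (F None) (\big[op/idx]_(x : T) F (Some x)).
Proof.
rewrite (bigD1 None) //= (reindex_omap Some id) => [|[x|] //].
by congr (op _); apply: eq_bigl => x; rewrite eqxx.
Qed.

Lemma sum_setC_const (T : finType) (S : {set T}) (F : T -> nat) c :
  {in ~: S, forall x, F x = c} -> \sum_(x in ~: S) F x = (#|T| - #|S|) * c.
Proof.
move=> Fc; rewrite (eq_bigr _ Fc) sum_nat_const.
by rewrite -(cardsC S) addKn.
Qed.

Section HamiltonianCycles.

Context {n : nat}.
Implicit Types (s : {perm 'I_n}) (e : {set 'I_n}) (H E : {set {set 'I_n}}).

Definition relabel s H : {set {set 'I_n}} := [set s @: e | e : {set 'I_n} in H].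

Lemma relabel_inj s : injective (relabel s).
Proof. exact/imset_inj/imset_inj/perm_inj. Qed.

Lemma relabelM s t H : relabel (s * t)%g H = relabel t (relabel s H).
Proof.
rewrite /relabel -imset_comp; apply: eq_imset => e /=.
by rewrite -imset_comp; apply: eq_imset => x; rewrite permM.
Qed.

Lemma relabelK s : cancel (relabel s) (relabel s^-1%g).
Proof.
move=> H; rewrite -relabelM mulgV /relabel -[RHS]imset_id.
by apply: eq_imset => e; rewrite -[RHS]imset_id; apply: eq_imset => x; rewrite perm1.
Qed.

Lemma hamiltonian_relabel s H : hamiltonian (relabel s H) = hamiltonian H.
Proof.
suff ham_relabel t H' : hamiltonian H' -> hamiltonian (relabel t H').
  apply/idP/idP; last exact: ham_relabel.
  by move/(ham_relabel s^-1%g); rewrite relabelK.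
case/existsP=> u /eqP ->; apply/existsP; exists (u * t)%g; apply/eqP.
rewrite /relabel -imset_comp; apply: eq_imset => k /=.
by rewrite imset_set2 !permM.
Qed.

Lemma mem_relabel s e H : (s @: e \in relabel s H) = (e \in H).
Proof. exact/mem_imset/imset_inj/perm_inj. Qed.

Lemma big_relabel {R : Type} {idx : R} {op : Monoid.com_law idx} s
    (F : {set {set 'I_n}} -> R) :
  \big[op/idx]_(H in HamX n) F (relabel s H) = \big[op/idx]_(H in HamX n) F H.
Proof.
rewrite [RHS](reindex_inj (@relabel_inj s)); apply: eq_bigl => H.
by rewrite !inE hamiltonian_relabel.
Qed.

Lemma mem_relabel_set2 s H (x y : 'I_n) :
  ([set x; y] \in relabel s H) = ([set s^-1%g x; s^-1%g y] \in H).
Proof. by rewrite -(mem_relabel s) imset_set2 !permKV. Qed.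

Lemma card_HamX_gt0 : (0 < #|HamX n|)%N.
Proof.
apply/card_gt0P; exists [set [set k; ordS k] | k : 'I_n]; rewrite inE.
by apply/existsP; exists 1%g; apply/eqP/eq_imset => k; rewrite !perm1.
Qed.

Hypothesis n_gt2 : (2 < n)%N.

Lemma ordS2_neq k : ordS (ordS k) != k :> 'I_n.
Proof.
apply/eqP=> /(congr1 val) /=; rewrite -addn1 modnDml addn1.
have kn := ltn_ord k; case: (ltnP k.+2 n) => [/modn_small -> | ge]; first lia.
have -> : k.+2 = k.+2 - n + n by lia.
by rewrite modnDr modn_small; lia.
Qed.

Lemma ordS_neq k : ordS k != k :> 'I_n.
Proof. by apply: contraNneq (ordS2_neq k) => E; rewrite !E. Qed.

Lemma hamiltonian_degree H u :
  hamiltonian H -> (\sum_(x | x != u) ([set u; x] \in H) = 2)%N.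
Proof.
case/existsP=> t /eqP ->.
have [k ->] : exists k, u = t k by exists (t^-1 u)%g; rewrite permKV.
set N := [set t (ordS k); t (ord_pred k)].
have nbr x : ([set t k; x] \in [set [set t j; t (ordS j)] | j : 'I_n]) = (x \in N).
  apply/imsetP/set2P => [[j _ /eqP]|[]->].
  - rewrite set2_eq !(inj_eq perm_inj) => /orP[]/andP[/eqP-> /eqP->]; first by left.
    by right; rewrite ordSK.
  - by exists k.
  - by exists (ord_pred k); rewrite // ord_predK set2C.
have kN : t k \notin N.
  rewrite !inE !(inj_eq perm_inj) -(inj_eq (@ordS_inj _) k (ord_pred k)) ord_predK.
  by rewrite negb_or !(eq_sym k) ordS_neq.
under eq_bigr do rewrite nbr.
rewrite -big_mkcondr /= sum1dep_card.
have -> : [set x | (x != t k) && (x \in N)] = N.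
  by apply/setP=> x; rewrite inE andb_idl // => xN; apply: contraNneq kN => <-.
have SP : ordS k != ord_pred k.
  by apply: contraNneq (ordS2_neq (ord_pred k)) => E; rewrite ord_predK E.
by rewrite cards2 (inj_eq perm_inj) SP.
Qed.

Definition ncycles E : nat := #|[set H in HamX n | E \subset H]|.

Lemma ncyclesE E : ncycles E = \sum_(H in HamX n) (E \subset H).
Proof.
rewrite /ncycles -sum1_card.
rewrite (eq_bigl (fun H => (H \in HamX n) && (E \subset H))) => [|H]; last by rewrite !inE.
by rewrite big_mkcondr; apply: eq_bigr => H _; case: (E \subset H).
Qed.

Lemma ncycles0 : ncycles set0 = #|HamX n|.
Proof. by rewrite ncyclesE; under eq_bigr do rewrite sub0set; rewrite sum1_card. Qed.

Lemma relabel_subset s E H : (relabel s E \subset relabel s H) = (E \subset H).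
Proof.
apply/idP/idP => [sub|]; last exact: imsetS.
by rewrite -(relabelK s E) -(relabelK s H); apply: imsetS.
Qed.

Lemma ncycles_relabel s E : ncycles (relabel s E) = ncycles E.
Proof.
by rewrite !ncyclesE -(big_relabel s); apply: eq_bigr => H _; rewrite relabel_subset.
Qed.

Lemma relabel_set2 s u v u' v' :
  relabel s [set [set u; v]; [set u'; v']] = [set [set s u; s v]; [set s u'; s v']].
Proof. by rewrite /relabel !imset_set2. Qed.

Lemma ncycles_star E w :
  \sum_(x | x != w) ncycles (E :|: [set [set w; x]]) = 2 * ncycles E.
Proof.
under eq_bigr do rewrite ncyclesE.
rewrite exchange_big ncyclesE big_distrr /=; apply: eq_bigr => H; rewrite inE => hamH.
under eq_bigr do rewrite subUset sub1set.
case: (E \subset H); last by rewrite big1.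
exact: hamiltonian_degree.
Qed.

Lemma ncycles_edge u v : u != v -> (n - 1) * ncycles [set [set u; v]] = 2 * #|HamX n|.
Proof.
move=> uv; rewrite -ncycles0 -(ncycles_star set0 u).
rewrite (eq_bigl [in ~: [set u]]) => [|x]; last by rewrite !inE.
rewrite (@sum_setC_const _ _ _ (ncycles [set [set u; v]])) ?card_ord ?cards1 //.
move=> x; rewrite !inE => xu; rewrite set0U.
by rewrite -(ncycles_relabel (tperm x v)) /relabel imset_set1 imset_set2 tpermL tpermD // eq_sym.
Qed.

Lemma ncycles_path u v w : u != v -> v != w -> u != w ->
  (n - 2) * ncycles [set [set u; v]; [set v; w]] = ncycles [set [set u; v]].
Proof.
move=> uv vw uw; have := ncycles_star [set [set u; v]] v.
rewrite (bigD1 u) //= (setUC [set v]) setUid.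
rewrite (eq_bigl [in ~: [set v; u]]) => [|x]; last by rewrite !inE negb_or.
rewrite (@sum_setC_const _ _ _ (ncycles [set [set u; v]; [set v; w]])).
  by rewrite card_ord cards2 eq_sym uv; lia.
move=> x; rewrite !inE negb_or => /andP[xv xu].
by rewrite -(ncycles_relabel (tperm x w)) relabel_set2 tpermL !tpermD // eq_sym.
Qed.

Lemma ncycles_matching u v w z :
  u != v -> u != w -> u != z -> v != w -> v != z -> w != z ->
  (n - 2) * ncycles [set [set u; v]; [set w; z]] = 2 * ncycles [set [set u; v]].
Proof.
move=> uv uw uz vw vz wz.
have vu : v != u by rewrite eq_sym.
have pu := ncycles_path v u w vu uw vw.
have pv := ncycles_path u v w uv vw uw.
rewrite (setUC [set v]) in pu.
have := ncycles_star [set [set u; v]] w.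
rewrite (bigD1 u) //= (bigD1 v) /=; last by rewrite vw.
rewrite (setUC [set w] [set u]) (setUC [set w] [set v]).
set D := ncycles [set [set u; v]; [set w; z]].
rewrite (eq_bigl [in ~: [set w; u; v]]) => [|x]; last by rewrite !inE !negb_or.
have z_out : z \in ~: [set w; u; v] by rewrite !inE !negb_or eq_sym wz eq_sym uz eq_sym vz.
have S3 : #|[set w; u; v]| = 3.
  by rewrite -setUA cardsU1 cards2 !inE negb_or uv eq_sym uw eq_sym vw.
have n4 : 3 < n by rewrite -(card_ord n) -(cardsC [set w; u; v]) S3; apply/card_gt0P; exists z.
rewrite (@sum_setC_const _ _ _ D).
  (* [A + B + (n - 3) D = 2 N] with [(n - 2) A = (n - 2) B = N]: scale by [n - 2], cancel [n - 3]. *)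
  rewrite card_ord S3 => /(congr1 (muln (n - 2))).
  rewrite !mulnDr pu pv mulnA [(n - 2) * _]mulnC -mulnA => E.
  apply/eqP; rewrite -(@eqn_pmul2l (n - 3)) ?subn_gt0 //; apply/eqP; lia.
move=> x; rewrite !inE !negb_or => /andP[/andP[xw xu] xv].
by rewrite -(ncycles_relabel (tperm x z)) relabel_set2 tpermL !tpermD // eq_sym.
Qed.

End HamiltonianCycles.

Local Open Scope ring_scope.

Definition lpeval {R : nzRingType} {n : nat} (H : {set {set 'I_n}}) (p : lpoly R n) : R :=
  \sum_(m : Mono n) mono_eval R m H * p m.
Arguments lpeval : simpl never.

Lemma lpeval_is_zmod_morphism (R : nzRingType) n (H : {set {set 'I_n}}) :
  zmod_morphism (@lpeval R n H).
Proof.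
by move=> p q; rewrite /lpeval -sumrB; apply: eq_bigr => m _; rewrite !ffunE mulrBr.
Qed.

HB.instance Definition _ (R : nzRingType) n H :=
  GRing.isZmodMorphism.Build (lpoly R n) R (@lpeval R n H) (@lpeval_is_zmod_morphism R n H).

Lemma lpevalE (R : nzRingType) n (H : {set {set 'I_n}}) (p : lpoly R n) :
  lpeval H p = p None + \sum_(e : Edge n) (val e \in H)%:R * p (Some e).
Proof. by rewrite /lpeval big_option /= mul1r. Qed.

Lemma lpeval_const (R : nzRingType) n (H : {set {set 'I_n}}) c : lpeval H (lconst R n c) = c.
Proof. by rewrite lpevalE ffunE big1 ?addr0 // => e _; rewrite ffunE mulr0. Qed.

Lemma lpeval_xvar (R : nzRingType) n (H : {set {set 'I_n}}) (i j : 'I_n) :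
  i != j -> lpeval H (xvar R i j) = ([set i; j] \in H)%:R.
Proof.
move=> ij; have ij2 : #|[set i; j]| == 2 by rewrite cards2 ij.
rewrite lpevalE ffunE add0r (bigD1 (exist _ [set i; j] ij2 : Edge n)) //= ffunE eqxx mulr1.
rewrite big1 ?addr0 // => e ne; rewrite ffunE.
have /negPf-> : val e != [set i; j] by apply: contra ne => /eqP ei; apply/eqP/val_inj.
by rewrite mulr0.
Qed.

Lemma A1_mulmx_coefvec (R : fieldType) n (p : lpoly R n) k :
  (A1 R n *m coefvec p) k 0 =
  #|HamX n|%:R^-1 * \sum_(H in HamX n) mono_eval R (enum_val k) H * lpeval H p.
Proof.
rewrite mxE; under eq_bigr do rewrite !mxE -mulrA mulr_suml.
rewrite -mulr_sumr exchange_big /=; congr (_ * _); apply: eq_bigr => H _.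
rewrite /lpeval mulr_sumr (big_enum_val (A := {: Mono n})) /=.
by apply: eq_bigr => l _; rewrite /one_fun mul1r mulrA.
Qed.

(* The [m]-th coordinate of [A1 *m coefvec p = lam *: coefvec p], scaled by [#|HamX n|]. *)
Definition A1_eigen_at {R : nzRingType} {n : nat} (p : lpoly R n) (lam : R) (m : Mono n) :=
  \sum_(H in HamX n) mono_eval R m H * lpeval H p = lam * #|HamX n|%:R * p m.

Lemma eigenvector_A1 {R : numFieldType} {n} {p : lpoly R n} {lam : R} (m0 : Mono n) :
  p m0 != 0 ->
  (forall m, A1_eigen_at p lam m) ->
  eigenvector (A1 R n) (coefvec p) lam.
Proof.
move=> pm0 sum_eq; split.
  by apply: contraNneq pm0 => /matrixP/(_ (enum_rank m0) 0); rewrite !mxE enum_rankK => ->.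
apply/matrixP => k j; rewrite ord1 A1_mulmx_coefvec sum_eq !mxE -mulrA mulrCA mulKf //.
by rewrite pnatr_eq0 -lt0n card_HamX_gt0.
Qed.

Section Eigenvectors.

Variable R : numFieldType.
Context {n : nat}.
Hypothesis n_gt2 : (2 < n)%N.
Implicit Types (p : lpoly R n) (lam : R) (m : Mono n) (s : {perm 'I_n}).
Implicit Types (a b c d : 'I_n) (H : {set {set 'I_n}}).

Lemma lpeval_degree H (i : 'I_n) :
  hamiltonian H ->
  lpeval H (lconst R n 2 - \sum_(j < n | j != i) xvar R i j) = 0.
Proof.
move=> hamH; rewrite raddfB /= (raddf_sum (lpeval H)) /= lpeval_const.
under eq_bigr => j ji do rewrite lpeval_xvar 1?eq_sym //.
by rewrite -natr_sum hamiltonian_degree ?subrr.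
Qed.

Lemma sum_relabel_odd s (G : {set {set 'I_n}} -> R) :
  (forall H, G (relabel s H) = - G H) -> \sum_(H in HamX n) G H = 0.
Proof.
move=> Godd; suff /eqP : (\sum_(H in HamX n) G H) *+ 2 = 0 by rewrite mulrn_eq0 => /eqP.
rewrite mulr2n -[X in X + _](big_relabel s); under eq_bigr do rewrite Godd.
by rewrite sumrN addNr.
Qed.

Lemma sum_mem2 (e f : {set 'I_n}) :
  \sum_(H in HamX n) (e \in H)%:R * (f \in H)%:R = (ncycles [set e; f])%:R :> R.
Proof.
rewrite ncyclesE natr_sum; apply: eq_bigr => H _.
by rewrite subUset !sub1set -natrM mulnb.
Qed.

Definition alt_cycle4 (a b c d : 'I_n) : lpoly R n :=
  xvar R a b - xvar R b c + xvar R c d - xvar R d a.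

Lemma alt_cycle4_rot a b c d : alt_cycle4 b c d a = - alt_cycle4 a b c d.
Proof. by apply/ffunP => m; rewrite !ffunE; ring. Qed.

Lemma A1_eigen_atN p lam m : A1_eigen_at p lam m -> A1_eigen_at (- p) lam m.
Proof.
rewrite /A1_eigen_at ffunE mulrN => <-; rewrite -sumrN.
by apply: eq_bigr => H _; rewrite raddfN mulrN.
Qed.

Lemma A1_eigen_at_rot a b c d lam m :
  A1_eigen_at (alt_cycle4 b c d a) lam m -> A1_eigen_at (alt_cycle4 a b c d) lam m.
Proof. by rewrite alt_cycle4_rot -{2}[alt_cycle4 a b c d]opprK => /A1_eigen_atN. Qed.

Lemma A1_eigen_at_odd s p lam m :
  (forall H, lpeval (relabel s H) p = - lpeval H p) ->
  (forall H, mono_eval R m (relabel s H) = mono_eval R m H) ->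
  p m = 0 -> A1_eigen_at p lam m.
Proof.
move=> p_odd m_even pm0; rewrite /A1_eigen_at pm0 mulr0 (sum_relabel_odd s) // => H.
by rewrite p_odd m_even mulrN.
Qed.

Lemma lpeval_alt_cycle4 H a b c d : uniq [:: a; b; c; d] ->
  lpeval H (alt_cycle4 a b c d) = ([set a; b] \in H)%:R - ([set b; c] \in H)%:R
                                  + ([set c; d] \in H)%:R - ([set d; a] \in H)%:R.
Proof.
move=> abcd; rewrite !(raddfB (lpeval H), raddfD (lpeval H)).
by rewrite /= !lpeval_xvar ?(uniq4_eqF abcd).
Qed.

Lemma lpeval_alt_cycle4_tperm H a b c d : uniq [:: a; b; c; d] ->
  lpeval (relabel (tperm a c) H) (alt_cycle4 a b c d) = - lpeval H (alt_cycle4 a b c d).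
Proof.
move=> abcd; rewrite !lpeval_alt_cycle4 // !mem_relabel_set2 tpermV tpermL tpermR.
rewrite !tpermD ?(uniq4_eqF abcd) // (set2C _ c b) (set2C _ b a) (set2C _ a d) (set2C _ d c).
by ring.
Qed.

Lemma alt_cycle4_coef_sym a b c d (e : Edge n) :
  uniq [:: a; b; c; d] -> (a \in val e) = (c \in val e) -> alt_cycle4 a b c d (Some e) = 0.
Proof.
move=> abcd ace.
have eF (f : {set 'I_n}) : (a \in f) != (c \in f) -> (val e == f) = false.
  by apply: contraNF => /eqP <-; rewrite ace eqxx.
by rewrite !ffunE /= !eF ?inE ?eqxx ?(uniq4_eqF abcd) // subrr addr0 subrr.
Qed.

Lemma alt_cycle4_coef_edge a b c d (e : Edge n) :
  uniq [:: a; b; c; d] -> val e = [set a; b] -> alt_cycle4 a b c d (Some e) = 1.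
Proof.
by move=> abcd ee; rewrite !ffunE /= ee !set2_eq !eqxx !(uniq4_eqF abcd) /= !subr0 addr0.
Qed.

Lemma A1_eigen_at_sym a b c d lam (e : Edge n) :
  uniq [:: a; b; c; d] -> (a \in val e) = (c \in val e) ->
  A1_eigen_at (alt_cycle4 a b c d) lam (Some e).
Proof.
move=> abcd ace; apply: (A1_eigen_at_odd (tperm a c)) => [H|H|].
- exact: lpeval_alt_cycle4_tperm.
- by rewrite /= -{1}(imset_tperm_id ace) mem_relabel.
- exact: alt_cycle4_coef_sym.
Qed.

Lemma A1_eigen_at_edge a b c d (e : Edge n) :
  uniq [:: a; b; c; d] -> val e = [set a; b] ->
  A1_eigen_at (alt_cycle4 a b c d) (2 / (n - 1)%:R) (Some e).
Proof.
move=> abcd ee; rewrite /A1_eigen_at alt_cycle4_coef_edge // mulr1 /= ee.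
under eq_bigr => H _ do rewrite lpeval_alt_cycle4 // mulrBr mulrDr mulrBr.
rewrite !(sumrB, big_split) /= !sum_mem2 setUid.
have neq := uniq4_eqF abcd.
have p1 : ((n - 2) * ncycles [set [set a; b]; [set b; c]] = ncycles [set [set a; b]])%N.
  by rewrite ncycles_path ?neq.
have p2 : ((n - 2) * ncycles [set [set a; b]; [set d; a]] = ncycles [set [set a; b]])%N.
  by rewrite (set2C _ d) (set2C _ a b) ncycles_path ?neq.
have p3 : ((n - 2) * ncycles [set [set a; b]; [set c; d]] = 2 * ncycles [set [set a; b]])%N.
  by rewrite ncycles_matching ?neq.
have Eabcd : ncycles [set [set a; b]; [set c; d]] =
             (ncycles [set [set a; b]; [set b; c]] + ncycles [set [set a; b]; [set d; a]])%N.
  apply/eqP; rewrite -(@eqn_pmul2l (n - 2)) ?subn_gt0 // mulnDr p1 p2 p3.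
  by rewrite mul2n addnn.
rewrite Eabcd natrD addrA subrK addrK.
have n1 : (n - 1)%:R != 0 :> R by rewrite pnatr_eq0 subn_eq0 -ltnNge ltnW.
have ab : a != b by rewrite neq.
have := congr1 (fun k => k%:R : R) (ncycles_edge n_gt2 a b ab); rewrite /= !natrM => Ec.
by rewrite mulrAC -Ec mulrC mulKf.
Qed.

Lemma A1_eigen_at_alt_cycle4 a b c d m : uniq [:: a; b; c; d] ->
  A1_eigen_at (alt_cycle4 a b c d) (2 / (n - 1)%:R) m.
Proof.
move=> abcd; have neq := uniq4_eqF abcd.
have bcda : uniq [:: b; c; d; a] by rewrite -(rot_uniq 1) in abcd.
have cdab : uniq [:: c; d; a; b] by rewrite -(rot_uniq 2) in abcd.
have dabc : uniq [:: d; a; b; c] by rewrite -(rot_uniq 3) in abcd.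
case: m => [e|]; last first.
  apply: (A1_eigen_at_odd (tperm a c)) => // [H|]; first exact: lpeval_alt_cycle4_tperm.
  by rewrite !ffunE subrr addr0 subrr.
have [ace|ace] := eqVneq (a \in val e) (c \in val e); first exact: A1_eigen_at_sym.
have [bde|bde] := eqVneq (b \in val e) (d \in val e).
  by apply: A1_eigen_at_rot; apply: A1_eigen_at_sym.
(* Otherwise [e] meets [{a, c}] and [{b, d}] once each: it is an edge of the 4-cycle. *)
have {}ace : (c \in val e) = ~~ (a \in val e) by move: ace; case: (a \in _); case: (c \in _).
have {}bde : (d \in val e) = ~~ (b \in val e) by move: bde; case: (b \in _); case: (d \in _).
have e2 := valP e; case ea: (a \in val e) in ace; case eb: (b \in val e) in bde.
- by apply: A1_eigen_at_edge; rewrite // (set2_of_card2 e2 ea eb) ?neq.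
- do 3 apply: A1_eigen_at_rot; apply: A1_eigen_at_edge => //.
  by rewrite (set2_of_card2 e2 bde ea) ?neq.
- apply: A1_eigen_at_rot; apply: A1_eigen_at_edge => //.
  by rewrite (set2_of_card2 e2 eb ace) ?neq.
- do 2 apply: A1_eigen_at_rot; apply: A1_eigen_at_edge => //.
  by rewrite (set2_of_card2 e2 ace bde) ?neq.
Qed.

End Eigenvectors.

Theorem lemma4 (R : realFieldType) (n : nat) (hn : (3 <= n)%N) :
  (forall i : 'I_n,
     eigenvector (A1 R n)
       (coefvec (lconst R n 2 - \sum_(j < n | j != i) xvar R i j)) 0)
  /\
  (forall a b c d : 'I_n, uniq [:: a; b; c; d] ->
     eigenvector (A1 R n)
       (coefvec (xvar R a b - xvar R b c + xvar R c d - xvar R d a))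
       (2 / (n - 1)%:R)).
Proof.
split=> [i | a b c d abcd].
  apply: (eigenvector_A1 None) => [|m].
    by rewrite !ffunE sum_ffunE big1 => [|j _]; rewrite ?ffunE // subr0 pnatr_eq0.
  rewrite /A1_eigen_at !mul0r big1 // => H; rewrite inE => hamH.
  by rewrite lpeval_degree ?mulr0.
have ab2 : #|[set a; b]| == 2 by rewrite cards2 (uniq4_eqF abcd).
apply: (eigenvector_A1 (Some (exist _ [set a; b] ab2 : Edge n))) => [|m].
  by rewrite alt_cycle4_coef_edge ?oner_eq0.
exact: A1_eigen_at_alt_cycle4.
Qed.
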